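(* Let $G$ be a graph on node set $V=\{1,\dots,n\}$ with symmetric adjacency matrix $A\in\mathbb{R}^{n\times n}$, let $C\subseteq V$ be a set of $m$ coarse nodes, and let $S\in\mathbb{R}^{n\times m}$ be a coarsening matrix whose rows are indexed by $V$ and whose columns are indexed by $C$. Define the coarse graph $G_c$ on node set $C$ by its adjacency matrix $A_c=S^TAS$. For each $j\in C$ let $\chi(j)=\{i\in V: S_{ij}\neq 0\}$ be its aggregation set, and suppose that for every $j\in C$, $\chi(j)$ contains only $j$ itself and direct neighbors of $j$ in $G$. Then, for any $j,j'\in C$, if there is an edge connecting $j$ and $j'$ in $G_c$, the distance between $j$ and $j'$ in $G$ is at most $3$.
   Context: Edges are determined by structural nonzeros: there is an edge between nodes $p,q$ (possibly $p=q$, a self loop) iff the corresponding adjacency entry is structurally nonzero. An entry of $A$ is structurally nonzero iff it is nonzero; an entry $(A_c)_{jj'}=\sum_{i,i'} S_{ij}A_{ii'}S_{i'j'}$ is structurally nonzero if at least one summand $S_{ij}A_{ii'}S_{i'j'}$ is nonzero, even if the summands cancel algebraically. A direct neighbor of $j$ is a node $i\neq j$ with $A_{ij}\neq 0$. The distance between two nodes of $G$ is the number of edges in a shortest path connecting them. *)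

From mathcomp Require Import all_boot all_order all_algebra.
Set Implicit Arguments. Unset Strict Implicit. Unset Printing Implicit Defensive.
Import Order.TTheory GRing.Theory Num.Theory.
Local Open Scope ring_scope.

Definition adj (R : ringType) (n : nat) (A : 'M[R]_n) : rel 'I_n :=
  fun p q => A p q != 0.

Definition dist_le (R : ringType) (n : nat) (A : 'M[R]_n) (k : nat)
  (x y : 'I_n) : Prop :=
  exists p : seq 'I_n, [/\ path (adj A) x p, last x p = y & (size p <= k)%N].

Definition chi (R : ringType) (n m : nat) (S : 'M[R]_(n, m)) (j : 'I_m)
  : {set 'I_n} := [set i | S i j != 0].

Definition coarse_adj (R : ringType) (n m : nat) (A : 'M[R]_n)
  (S : 'M[R]_(n, m)) : 'M[R]_m := S^T *m A *m S.

(* (A_c)_{jj'} = sum_{i,i'} S_ij A_ii' S_i'j' is structurally nonzero iff some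
   summand is nonzero (even if the summands cancel). *)
Definition coarse_edge (R : ringType) (n m : nat) (A : 'M[R]_n)
  (S : 'M[R]_(n, m)) (j j' : 'I_m) : Prop :=
  exists i i' : 'I_n, S i j * A i i' * S i' j' != 0.

(* A structural nonzero of A_c at (j, j') is a nonzero summand S_ij A_ii' S_i'j',
   so i is in chi(j), i' is in chi(j') and i, i' are adjacent in G.  Since every
   node of chi(j) is within distance 1 of j, the triangle inequality for the
   graph distance gives 1 + 1 + 1 = 3. *)

From mathcomp Require Import all_boot all_order all_algebra.
Set Implicit Arguments. Unset Strict Implicit. Unset Printing Implicit Defensive.
Import Order.TTheory GRing.Theory Num.Theory.
Local Open Scope ring_scope.

Section GraphDistance.

Variables (R : nzRingType) (n : nat) (A : 'M[R]_n).

Lemma adj_sym : A^T = A -> symmetric (adj A).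
Proof. by move=> symA p q; rewrite /adj -{1}symA mxE. Qed.

Lemma dist_le_refl (k : nat) (x : 'I_n) : dist_le A k x x.
Proof. by exists [::]. Qed.

Lemma dist_le1_adj (x y : 'I_n) : adj A x y -> dist_le A 1 x y.
Proof. by move=> xy; exists [:: y]; rewrite /= xy. Qed.

Lemma dist_le_trans (k l : nat) (x y z : 'I_n) :
  dist_le A k x y -> dist_le A l y z -> dist_le A (k + l) x z.
Proof.
move=> [p [xp <- sp]] [q [yq <- sq]].
by exists (p ++ q); rewrite cat_path last_cat size_cat xp yq leq_add.
Qed.

Lemma dist_le_sym (k : nat) (x y : 'I_n) :
  A^T = A -> dist_le A k x y -> dist_le A k y x.
Proof.
move=> symA [p [xp <- sp]]; exists (rev (belast x p)); split.
- by rewrite rev_path; apply: sub_path xp => a b; rewrite adj_sym.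
- by case: p {xp sp} => [|z p] //=; rewrite rev_cons last_rcons.
- by rewrite size_rev size_belast.
Qed.

Lemma dist_le1_nbhd (x y : 'I_n) :
  y = x \/ (y != x /\ A y x != 0) -> dist_le A 1 y x.
Proof. by move=> [-> | [_ yx]]; [apply: dist_le_refl | apply: dist_le1_adj]. Qed.

End GraphDistance.

Lemma coarse_edge_witness (R : nzRingType) (n m : nat) (A : 'M[R]_n)
    (S : 'M[R]_(n, m)) (j j' : 'I_m) :
  coarse_edge A S j j' ->
  exists i i', [/\ i \in chi S j, adj A i i' & i' \in chi S j'].
Proof.
move=> [i [i' nz]]; exists i, i'; rewrite !inE /adj; split.
- by apply: contra nz => /eqP ->; rewrite !mul0r.
- by apply: contra nz => /eqP ->; rewrite mulr0 mul0r.
- by apply: contra nz => /eqP ->; rewrite mulr0.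
Qed.

Theorem corollary1 (R : realFieldType) (n m : nat) (A : 'M[R]_n)
  (S : 'M[R]_(n, m)) (c : 'I_m -> 'I_n) :
  A^T = A ->
  injective c ->
  (forall j : 'I_m, forall i, i \in chi S j ->
     i = c j \/ (i != c j /\ A i (c j) != 0)) ->
  forall j j' : 'I_m, coarse_edge A S j j' -> dist_le A 3 (c j) (c j').
Proof.
move=> symA _ chi_nbhd j j' /coarse_edge_witness [i [i' [chi_i ii' chi_i']]].
have i_cj : dist_le A 1 i (c j) by apply/dist_le1_nbhd/chi_nbhd.
have i'_cj' : dist_le A 1 i' (c j') by apply/dist_le1_nbhd/chi_nbhd.
have cj_i' : dist_le A (1 + 1) (c j) i'.
  exact: dist_le_trans (dist_le_sym symA i_cj) (dist_le1_adj ii').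
exact: dist_le_trans cj_i' i'_cj'.
Qed.
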